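(* For every positive integer $k$ there is a constant $C_k>0$ such that the following holds. Let $r\in\mathbb{C}$, let $N$ be a positive integer, let $A=\{r, r+1,\ldots, r+N-1\}$, and let $B\subset\mathbb{C}$ be a finite set with $A\subseteq B.B=\{bb':b,b'\in B\}$. Let $G$ be a containment graph of $A$ in $B.B$. If $G$ contains a cycle of length $2k$, then $r$ is an algebraic number of degree at most $k$ and height at most $C_kN^k$.
   Context: Containment graph: given $A\subseteq B.B$, the containment graph $G(A,B.B)$ is the bipartite graph whose two colour classes are two disjoint copies of $B$, obtained by choosing for each $a\in A$ one fixed representation $a=b_1b_2$ with $b_1,b_2\in B$ and placing an edge between $b_1$ in the first copy and $b_2$ in the second copy (so it has $2|B|$ vertices and $|A|$ edges). The height of an integer polynomial is the largest absolute value of its coefficients. The height of an algebraic number $\alpha$ is the height of its primitive polynomial, i.e. the integer polynomial of minimal degree, and with leading coefficient minimal in absolute value, having $\alpha$ as a root. *)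

From HB Require Import structures.
From mathcomp Require Import all_boot all_order all_algebra.
From mathcomp Require Import complex.
From mathcomp Require Import Rstruct.
From Stdlib Require Rdefinitions.
Set Implicit Arguments. Unset Strict Implicit. Unset Printing Implicit Defensive.
Import Order.TTheory GRing.Theory Num.Theory.
Local Open Scope ring_scope.

Definition CC : Type := Rdefinitions.R[i].

Definition poly_height (p : {poly int}) : nat :=
  (\max_(i < size p) absz (nth 0%R (polyseq p) i))%N.

(* p is "the" primitive polynomial of alpha (as in the paper): a nonzero
   integer polynomial having alpha as a root, of minimal degree, and among
   those of minimal degree, with leading coefficient minimal in absolute value.
   (It is unique up to sign.) *)
Definition is_primitive_poly (alpha : CC) (p : {poly int}) : Prop :=
  [/\ p != 0, root (map_poly (fun z : int => z%:~R : CC) p) alpha &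
      forall q : {poly int}, q != 0 ->
        root (map_poly (fun z : int => z%:~R : CC) q) alpha ->
        (size p <= size q)%N /\
        (size q = size p -> `|lead_coef p| <= `|lead_coef q|)].

(* A containment graph of A = {r, r+1, ..., r+N-1} in B.B: for each element
   a_i = r + i (i < N) a fixed representation rep i = (b1, b2) with b1, b2 in B
   and b1 * b2 = a_i.  Its edges are indexed by 'I_N: edge i joins rep i .1
   (first copy of B) to rep i .2 (second copy of B). *)
Definition containment_rep (r : CC) (N : nat) (B : seq CC)
    (rep : 'I_N -> CC * CC) : Prop :=
  forall i : 'I_N, [/\ (rep i).1 \in B, (rep i).2 \in B &
                      (rep i).1 * (rep i).2 = r + (i : nat)%:R].

(* The containment graph given by rep contains a cycle of length 2k (k > 0):
   distinct first-copy vertices x_0..x_{k-1}, distinct second-copy vertices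
   y_0..y_{k-1}, and 2k distinct edges e_j = {x_j, y_j}, f_j = {x_{j+1}, y_j}
   (indices mod k). *)
Definition has_cycle_2k (N : nat) (rep : 'I_N -> CC * CC) (k : nat) : Prop :=
  exists (x y : 'I_k -> CC) (e f : 'I_k -> 'I_N),
    [/\ injective x, injective y, injective e, injective f &
        forall j j' : 'I_k, e j != f j'] /\
    (forall j : 'I_k, rep (e j) = (x j, y j) /\ rep (f j) = (x (ordS j), y j)).

(* Along a 2k-cycle x_0 y_0 x_1 y_1 ... of the containment graph the edges
   alternately carry the products x_j y_j = r + e_j and x_(j+1) y_j = r + f_j,
   so prod_j (r + e_j) = prod_j (r + f_j) with {e_j} and {f_j} disjoint subsets
   of [0, N).  Hence r is a root of a nonzero integer polynomial P of degree at
   most k and l1-norm at most 2 N^k.  The primitive polynomial p of r divides P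
   and has content 1, and Landau's inequality M(P) <= ||P||_1 (proved by
   averaging over roots of unity) gives Mignotte's bound
   |p_i| <= 2^deg p M(p) <= 2^k ||P||_1 <= 2^(k+1) N^k. *)

From mathcomp Require Import all_boot all_order all_algebra all_field cyclic.
From mathcomp Require Import complex Rstruct zify.
From Stdlib Require Rdefinitions.
From Stdlib Require Import Classical Wf_nat.

Set Implicit Arguments. Unset Strict Implicit. Unset Printing Implicit Defensive.
Import Order.TTheory GRing.Theory Num.Theory.
Local Open Scope ring_scope.

Section PolyNorm1.
Variable R : numDomainType.
Implicit Types (p q : {poly R}) (c : R).

Definition poly_norm1 p : R := \sum_(i < size p) `|p`_i|.

Lemma poly_norm1_ge0 p : 0 <= poly_norm1 p.
Proof. by apply: sumr_ge0 => i _; apply: normr_ge0. Qed.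

Lemma poly_norm1_widen n p :
  (size p <= n)%N -> \sum_(i < n) `|p`_i| = poly_norm1 p.
Proof.
move=> le_p_n; rewrite /poly_norm1 (big_ord_widen n (fun i => `|p`_i|) le_p_n).
rewrite [RHS]big_mkcond /=; apply: eq_bigr => i _.
by case: ltnP => // le_p_i; rewrite nth_default ?normr0.
Qed.

Lemma norm_coef_le_poly_norm1 p i : `|p`_i| <= poly_norm1 p.
Proof.
have [lt_i_p | le_p_i] := ltnP i (size p); last first.
  by rewrite nth_default ?normr0 ?poly_norm1_ge0.
rewrite /poly_norm1 (bigD1 (Ordinal lt_i_p)) //= lerDl.
by apply: sumr_ge0 => j _; apply: normr_ge0.
Qed.

Lemma poly_norm1Z_le c p : poly_norm1 (c *: p) <= `|c| * poly_norm1 p.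
Proof.
rewrite -(poly_norm1_widen (size_scale_leq c p)) /poly_norm1 mulr_sumr.
by apply: ler_sum => i _; rewrite coefZ normrM.
Qed.

Lemma poly_norm1B_le p q : poly_norm1 (p - q) <= poly_norm1 p + poly_norm1 q.
Proof.
set n := maxn (size p) (size q).
have le_pq_n : (size (p - q)%R <= n)%N.
  by apply: leq_trans (size_polyD _ _) _; rewrite size_polyN.
rewrite -(poly_norm1_widen (leq_maxl (size p) (size q))).
rewrite -(poly_norm1_widen (leq_maxr (size p) (size q))) -(poly_norm1_widen le_pq_n).
by rewrite -big_split; apply: ler_sum => i _; rewrite coefB ler_normB.
Qed.

Lemma poly_norm1_mulXsubC_le c p :
  poly_norm1 (('X - c%:P) * p) <= (1 + `|c|) * poly_norm1 p.
Proof.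
have le_size : (size (('X - c%:P) * p)%R <= (size p).+1)%N.
  by apply: leq_trans (size_polyMleq _ _) _; rewrite size_XsubC; case: (size p).
have shiftX : poly_norm1 p = \sum_(i < (size p).+1) `|('X * p)`_i|.
  by rewrite big_ord_recl coefXM normr0 add0r; apply: eq_bigr => i _; rewrite coefXM.
rewrite -(poly_norm1_widen le_size) [leRHS]mulrDl mul1r {1}shiftX.
rewrite -(poly_norm1_widen (leqnSn (size p))) mulr_sumr -big_split /=.
apply: ler_sum => i _; rewrite mulrBl coefB coefCM.
by rewrite (le_trans (ler_normB _ _)) // normrM.
Qed.

Lemma poly_norm1_prod_XsubC_le (I : Type) (s : seq I) (F : I -> R) :
  poly_norm1 (\prod_(i <- s) ('X - (F i)%:P)) <= \prod_(i <- s) (1 + `|F i|).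
Proof.
elim: s => [|i s IHs].
  by rewrite !big_nil /poly_norm1 size_poly1 big_ord1 coefC normr1.
rewrite !big_cons (le_trans (poly_norm1_mulXsubC_le _ _)) //.
by rewrite ler_wpM2l // addr_ge0.
Qed.

Lemma norm_horner_le_poly_norm1 p (w : R) : `|w| <= 1 -> `|p.[w]| <= poly_norm1 p.
Proof.
move=> w_le1; rewrite horner_coef (le_trans (ler_norm_sum _ _ _)) //.
apply: ler_sum => i _; rewrite normrM normrX.
by rewrite ler_piMr // exprn_ile1.
Qed.

End PolyNorm1.

Section MahlerMeasure.
Variable C : numClosedFieldType.
Implicit Types (z w c : C) (s : seq C) (p : {poly C}).

Lemma closed_prim_root_exists n : (0 < n)%N -> exists w : C, n.-primitive_root w.
Proof.
move=> n_gt0; have [s Ds] := closed_field_poly_normal ('X^n - 1 : {poly C}).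
rewrite (monicP _) ?monicXnsubC // scale1r in Ds.
have s_unity : all n.-unity_root s by apply/allP=> z; rewrite -root_prod_XsubC -Ds.
have size_s : (n < (size s).+1)%N by rewrite -(size_prod_XsubC s id) -Ds size_XnsubC.
have [|w] := hasP (has_prim_root n_gt0 s_unity _ size_s); last by exists w.
by rewrite -separable_prod_XsubC -Ds separable_Xn_sub_1 // pnatr_eq0 -lt0n.
Qed.

Lemma norm_prim_root_expr n w j : n.-primitive_root w -> `|w ^+ j| = 1.
Proof.
move=> w_prim; rewrite normrX; suff -> : `|w| = 1 by rewrite expr1n.
apply/eqP; rewrite -(pexpr_eq1 (prim_order_gt0 w_prim)) // -normrX.
by rewrite prim_expr_order // normr1.
Qed.

Lemma sum_horner_prim_root n w p : n.-primitive_root w -> (size p <= n)%N ->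
  \sum_(j < n) p.[w ^+ j] = n%:R * p`_0.
Proof.
case: n => [|n] w_prim le_p_n; first by have := prim_order_gt0 w_prim.
under eq_bigr => j _ do rewrite (horner_coef_wide _ le_p_n).
rewrite exchange_big big_ord_recl /= [X in _ + X]big1 ?addr0.
  by under eq_bigr => j _ do rewrite expr0 mulr1; rewrite sumr_const card_ord mulr_natl.
move=> i _; rewrite -mulr_sumr.
under eq_bigr => j _ do rewrite -exprM mulnC exprM.
set x := w ^+ bump 0 i.
have x_neq1 : x != 1.
  rewrite -(expr0 w) (eq_prim_root_expr w_prim) mod0n modn_small //.
  by rewrite /bump /= add1n ltnS.
have : (x - 1) * \sum_(j < n.+1) x ^+ j = 0.
  by rewrite -subrX1 -exprM mulnC exprM (prim_expr_order w_prim) expr1n subrr.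
by move/eqP; rewrite mulf_eq0 subr_eq0 (negPf x_neq1) => /eqP ->; rewrite mulr0.
Qed.

Definition mahler_term z : C := if 1 < `|z| then `|z| else 1.

(* On the unit circle [1 - z^* X] has the same modulus as [X - z], while its
   constant coefficient has modulus 1: reflecting the roots inside the disc
   turns the constant coefficient into the Mahler measure. *)
Definition mahler_factor z : {poly C} :=
  if 1 < `|z| then 'X - z%:P else 1 - z^* *: 'X.

Lemma mahler_term_ge1 z : 1 <= mahler_term z.
Proof. by rewrite /mahler_term; case: ifP => // /ltW. Qed.

Lemma prod_mahler_term_ge1 s : 1 <= \prod_(z <- s) mahler_term z.
Proof.
elim: s => [|z s IHs]; first by rewrite big_nil.
by rewrite big_cons mulr_ege1 ?mahler_term_ge1.
Qed.

Lemma size_mahler_factor z : (size (mahler_factor z) <= 2)%N.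
Proof.
rewrite /mahler_factor; case: ifP => _; first by rewrite size_XsubC.
apply: leq_trans (size_polyD _ _) _; rewrite size_polyN size_poly1 geq_max /=.
by apply: leq_trans (size_scale_leq _ _) _; rewrite size_polyX.
Qed.

Lemma size_prod_mahler_factor s :
  (size (\prod_(z <- s) mahler_factor z)%R <= (size s).+1)%N.
Proof.
elim: s => [|z s IHs]; first by rewrite big_nil size_poly1.
rewrite big_cons; apply: leq_trans (size_polyMleq _ _) _.
by have := size_mahler_factor z; move: IHs; rewrite /=; lia.
Qed.

Lemma norm_horner_mahler_factor z w :
  `|w| = 1 -> `|(mahler_factor z).[w]| = `|w - z|.
Proof.
move=> w_unit; rewrite /mahler_factor; case: ifP => _; first by rewrite hornerXsubC.
rewrite !hornerE; have -> : 1 = w^* * w by rewrite mulrC -normCK w_unit expr1n.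
by rewrite -mulrBl -rmorphB normrM norm_conjC w_unit mulr1.
Qed.

Lemma norm_mahler_factor0 z : `|(mahler_factor z).[0]| = mahler_term z.
Proof.
rewrite /mahler_factor /mahler_term; case: ifP => _.
  by rewrite hornerXsubC sub0r normrN.
by rewrite !hornerE subr0 normr1.
Qed.

Lemma landau_inequality c s :
  `|c| * \prod_(z <- s) mahler_term z <= poly_norm1 (c *: \prod_(z <- s) ('X - z%:P)).
Proof.
set p := c *: _; set h := c *: \prod_(z <- s) mahler_factor z.
have [w w_prim] := closed_prim_root_exists (ltn0Sn (size s)).
have le_h_s : (size h <= (size s).+1)%N.
  exact: leq_trans (size_scale_leq _ _) (size_prod_mahler_factor _).
have h0 : `|h`_0| = `|c| * \prod_(z <- s) mahler_term z.
  rewrite -horner_coef0 hornerZ horner_prod normrM normr_prod.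
  by congr (_ * _); apply: eq_bigr => z _; rewrite norm_mahler_factor0.
have h_eq_p j : `|h.[w ^+ j]| = `|p.[w ^+ j]|.
  rewrite !hornerZ !horner_prod !normrM !normr_prod; congr (_ * _).
  apply: eq_bigr => z _.
  by rewrite norm_horner_mahler_factor ?(norm_prim_root_expr _ w_prim) ?hornerXsubC.
rewrite -(@ler_pM2l _ (size s).+1%:R) ?ltr0n // -h0 -normr_nat -normrM.
rewrite -(sum_horner_prim_root w_prim le_h_s) (le_trans (ler_norm_sum _ _ _)) //.
rewrite normr_nat mulr_natl -[in leRHS](card_ord (size s).+1) -sumr_const.
apply: ler_sum => j _.
by rewrite h_eq_p norm_horner_le_poly_norm1 // (norm_prim_root_expr _ w_prim).
Qed.

Lemma prod_1_norm_le_mahler s :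
  \prod_(z <- s) (1 + `|z|) <= 2 ^+ size s * \prod_(z <- s) mahler_term z.
Proof.
elim: s => [|z s IHs]; first by rewrite !big_nil expr0 mulr1.
rewrite !big_cons exprS mulrACA ler_pM ?addr_ge0 //.
  by rewrite prodr_ge0 // => i _; rewrite addr_ge0.
rewrite /mahler_term; case: ifP => [/ltW le1z | ].
  by rewrite mulr2n mulrDl mul1r lerD2r.
by move=> /negbT; rewrite mulr1 -real_leNgt ?normr_real // => lez1; rewrite lerD2l.
Qed.

Lemma norm_coef_le_mahler c s i :
  `|(c *: \prod_(z <- s) ('X - z%:P))`_i|
    <= `|c| * (2 ^+ size s * \prod_(z <- s) mahler_term z).
Proof.
rewrite (le_trans (norm_coef_le_poly_norm1 _ _)) // (le_trans (poly_norm1Z_le _ _)) //.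
rewrite ler_wpM2l // (le_trans (poly_norm1_prod_XsubC_le _ _)) //.
exact: prod_1_norm_le_mahler.
Qed.

End MahlerMeasure.

Section IntegerPolynomials.
Variable C : numClosedFieldType.
Local Notation toC := (map_poly (fun z : int => z%:~R : C)).

(* Mignotte's bound: [|p_i| <= 2^deg p M(p) <= 2^deg p M(p) M(q) <= ||pq||_1],
   where [M(q) >= 1] because the leading coefficient of [q] is a nonzero
   integer. *)
Lemma norm_coef_le_poly_norm1_mul (p q : {poly int}) i : q != 0 ->
  (absz p`_i)%:R <= 2 ^+ (size p).-1 * poly_norm1 (toC (p * q)) :> C.
Proof.
move=> q_neq0; have [-> | p_neq0] := eqVneq p 0.
  by rewrite coef0 mulr_ge0 ?exprn_ge0 ?poly_norm1_ge0.
have size_toC r : size (toC r) = size r by rewrite size_map_inj_poly //; apply: intr_inj.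
have lead_toC r : lead_coef (toC r) = (lead_coef r)%:~R.
  by rewrite lead_coef_map_inj //; apply: intr_inj.
have [s Ds] := closed_field_poly_normal (toC p).
have [t Dt] := closed_field_poly_normal (toC q).
set a := lead_coef (toC p) in Ds; set b := lead_coef (toC q) in Dt.
have size_s : size s = (size p).-1.
  have a_neq0 : a != 0 by rewrite lead_coef_eq0 -size_poly_eq0 size_toC size_poly_eq0.
  by rewrite -size_toC Ds size_scale // size_prod_XsubC.
have b_ge1 : 1 <= `|b|.
  by rewrite /b lead_toC -intr_norm ler1z -gtz0_ge1 normr_gt0 lead_coef_eq0.
have Dpq : toC (p * q) = (a * b) *: \prod_(z <- s ++ t) ('X - z%:P).
  have -> : toC (p * q) = toC p * toC q by rewrite rmorphM.
  by rewrite Ds Dt big_cat -scalerAl -scalerAr scalerA.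
have -> : (absz p`_i)%:R = `|(toC p)`_i| by rewrite coef_map natr_absz intr_norm.
rewrite Ds (le_trans (norm_coef_le_mahler _ _ _)) // size_s mulrCA.
rewrite ler_wpM2l ?exprn_ge0 //.
rewrite Dpq (le_trans _ (landau_inequality _ _)) // big_cat normrM mulrACA ler_peMr //.
  by rewrite mulr_ge0 ?prodr_ge0 // => z _; rewrite (le_trans _ (mahler_term_ge1 z)).
by rewrite mulr_ege1 ?prod_mahler_term_ge1.
Qed.

End IntegerPolynomials.

Local Notation toCC := (map_poly (fun z : int => z%:~R : CC)).

Lemma ex_minn_classical (Q : nat -> Prop) :
  (exists n, Q n) -> exists n, Q n /\ forall m, Q m -> (n <= m)%N.
Proof.
move=> exQ; have [n [[Qn n_min] _]] :=
  dec_inh_nat_subset_has_unique_least_element _ (fun n => classic (Q n)) exQ.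
by exists n; split=> // m /n_min /ssrnat.leP.
Qed.

Section PrimitivePolynomial.
Variable alpha : CC.

Lemma primitive_poly_exists q : q != 0 -> root (toCC q) alpha ->
  exists p, is_primitive_poly alpha p.
Proof.
move=> q_neq0 q_root.
have [m [[q' [q'_neq0 q'_root size_q']] m_min]] :=
  ex_minn_classical (ex_intro (fun m => exists q, [/\ q != 0, root (toCC q) alpha
    & size q = m]) _ (ex_intro _ q (And3 q_neq0 q_root erefl))).
have [l [[p [p_neq0 p_root size_p lead_p]] l_min]] :=
  ex_minn_classical (ex_intro (fun l => exists p, [/\ p != 0, root (toCC p) alpha,
    size p = m & absz (lead_coef p) = l]) _
    (ex_intro _ q' (And4 q'_neq0 q'_root size_q' erefl))).
exists p; split=> // r r_neq0 r_root; split=> [|size_r].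
  by rewrite size_p; apply: m_min; exists r.
by rewrite -!abszE lez_nat lead_p; apply: l_min; exists r; rewrite size_r.
Qed.

Variable p : {poly int}.
Hypothesis p_prim : is_primitive_poly alpha p.

Lemma primitive_poly_zcontents : `|zcontents p| = 1.
Proof.
have [p_neq0 p_root p_min] := p_prim.
have c_neq0 : zcontents p != 0 by rewrite zcontents_eq0.
have root_prim : root (toCC (zprimitive p)) alpha.
  by move: p_root; rewrite {1}[p]zpolyEprim map_polyZ rootZ // intr_eq0.
have prim_neq0 : zprimitive p != 0 by rewrite zprimitive_eq0.
have [_ /(_ (size_zprimitive p))] := p_min _ prim_neq0 root_prim.
rewrite {1}[p]zpolyEprim lead_coefZ normrM ger_pMl ?normr_gt0 ?lead_coef_eq0 //.
by move: c_neq0; lia.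
Qed.

Lemma primitive_poly_dvdp q : root (toCC q) alpha -> p %| q.
Proof.
have [p_neq0 p_root p_min] := p_prim.
move=> q_root; apply: contraT => /negbTE p_ndvd_q.
have r_neq0 : q %% p != 0 by rewrite -/(dvdp p q) p_ndvd_q.
have r_root : root (toCC (q %% p)) alpha.
  have := congr1 (fun f => (toCC f).[alpha]) (Pdiv.Idomain.divp_eq q p) => /=.
  rewrite map_polyZ !rmorphD !rmorphM hornerZ hornerD hornerM.
  by rewrite (rootP q_root) (rootP p_root) mulr0 mulr0 add0r => /esym/eqP.
have [size_p_r _] := p_min _ r_neq0 r_root.
by have := leq_trans (ltn_modpN0 q p_neq0) size_p_r; rewrite ltnn.
Qed.

End PrimitivePolynomial.

Section ShiftedProduct.
Variable R : numDomainType.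
Variables (k : nat) (a : 'I_k -> nat).

Definition shift_prod : {poly R} := \prod_(j < k) ('X - (- (a j)%:R)%:P).

Lemma size_shift_prod : size shift_prod = k.+1.
Proof. by rewrite size_prod_XsubC [index_enum _]unlock -enumT size_enum_ord. Qed.

Lemma horner_shift_prod x : shift_prod.[x] = \prod_(j < k) (x + (a j)%:R).
Proof. by rewrite horner_prod; apply: eq_bigr => j _; rewrite hornerXsubC opprK. Qed.

Lemma poly_norm1_shift_prod N :
  (forall j, a j < N)%N -> poly_norm1 shift_prod <= N%:R ^+ k.
Proof.
move=> a_lt_N; rewrite (le_trans (poly_norm1_prod_XsubC_le _ _)) //.
rewrite -[in leRHS](card_ord k) -prodr_const; apply: ler_prod => j _.
by rewrite addr_ge0 //= normrN normr_nat nat1r ler_nat.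
Qed.

End ShiftedProduct.

Lemma map_shift_prod k (a : 'I_k -> nat) : toCC (shift_prod _ a) = shift_prod _ a.
Proof.
rewrite /shift_prod rmorph_prod; apply: eq_bigr => j _ /=.
by rewrite rmorphB /= map_polyX map_polyC /= rmorphN rmorph_nat.
Qed.

(* Along the cycle, [prod_j (r + e_j) = prod_j x_j y_j = prod_j x_(j+1) y_j
   = prod_j (r + f_j)], so [r] is a root of the difference of two shifted
   products; it is nonzero because [-e_0] is a root of only one of them. *)
Lemma cycle_annihilating_poly (r : CC) N (B : seq CC) (rep : 'I_N -> CC * CC) k :
  (0 < k)%N -> containment_rep r B rep -> has_cycle_2k rep k ->
  exists P : {poly int}, [/\ P != 0, root (toCC P) r, (size P <= k.+1)%N
                          & poly_norm1 (toCC P) <= 2 * N%:R ^+ k].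
Proof.
move=> k_gt0 repP [x [y [e [f [[_ _ _ _ e_neq_f] cycle_rep]]]]].
pose ea j := (e j : nat); pose fa j := (f j : nat).
exists (shift_prod _ ea - shift_prod _ fa).
have -> : toCC (shift_prod _ ea - shift_prod _ fa) = shift_prod _ ea - shift_prod _ fa.
  by rewrite -!map_shift_prod rmorphB.
split.
- pose j0 := Ordinal k_gt0; apply/eqP => /(congr1 (horner^~ (- (ea j0)%:R))).
  rewrite hornerD hornerN !horner_shift_prod horner0 (bigD1 j0) //= addNr mul0r sub0r.
  apply/eqP; rewrite oppr_eq0 prodf_seq_neq0; apply/allP => j _ /=.
  rewrite addrC subr_eq0 eqr_nat; apply: contraNneq (e_neq_f j0 j) => ea_fa.
  by apply/eqP/val_inj.
- have e_prod j : r + (ea j)%:R = x j * y j.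
    by have [_ _ <-] := repP (e j); rewrite (cycle_rep j).1.
  have f_prod j : r + (fa j)%:R = x (ordS j) * y j.
    by have [_ _ <-] := repP (f j); rewrite (cycle_rep j).2.
  rewrite /root hornerD hornerN !horner_shift_prod subr_eq0.
  under eq_bigr do rewrite e_prod; under [X in _ == X]eq_bigr do rewrite f_prod.
  by rewrite !big_split /= [X in X * _ == _](reindex_inj (@ordS_inj k)).
- by apply: leq_trans (size_polyD _ _) _; rewrite size_polyN !size_shift_prod maxnn.
- rewrite (le_trans (poly_norm1B_le _ _)) // mulr2n mulrDl mul1r.
  by rewrite lerD // poly_norm1_shift_prod // => j; rewrite ltn_ord.
Qed.

Theorem lemma3 :
  forall k : nat, (0 < k)%N ->
  exists Ck : Rdefinitions.R, 0 < Ck /\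
    forall (r : CC) (N : nat) (B : seq CC) (rep : 'I_N -> CC * CC),
      (0 < N)%N ->
      containment_rep r B rep ->
      has_cycle_2k rep k ->
      (exists p : {poly int}, is_primitive_poly r p) /\
      (forall p : {poly int}, is_primitive_poly r p ->
         ((size p).-1 <= k)%N /\
         (poly_height p)%:R <= Ck * (N%:R) ^+ k).
Proof.
move=> k k_gt0; exists (2 ^ k.+1)%:R; split; first by rewrite ltr0n expn_gt0.
move=> r N B rep _ repP cycle.
have [P [P_neq0 P_root size_P norm_P]] := cycle_annihilating_poly k_gt0 repP cycle.
split; first exact: primitive_poly_exists P_root.
move=> p p_prim; have [_ _ /(_ P P_neq0 P_root) [size_p_P _]] := p_prim.
have size_p : (size p <= k.+1)%N := leq_trans size_p_P size_P.
split; first by rewrite -subn1 leq_subLR add1n.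
have [q Dq] := dvdpP_int (primitive_poly_dvdp p_prim P_root).
have q_neq0 : q != 0 by apply: contraNneq P_neq0 => q0; rewrite Dq q0 mulr0.
rewrite -natrX -natrM ler_nat; apply/bigmax_leqP => i _; rewrite -(ler_nat CC).
have -> : (absz p`_i)%:R = (absz (zprimitive p)`_i)%:R :> CC.
  by rewrite !natr_absz {1}[p]zpolyEprim coefZ normrM
    (primitive_poly_zcontents p_prim) mul1r.
rewrite (le_trans (norm_coef_le_poly_norm1_mul _ _ _ q_neq0)) // -Dq size_zprimitive.
rewrite natrM !natrX exprSr -mulrA ler_pM ?exprn_ge0 ?poly_norm1_ge0 //.
by rewrite ler_weXn2l ?ler1n // -subn1 leq_subLR add1n.
Qed.
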